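(* Let $G$ be a graph with a linear order $<$ on $V(G)$ satisfying the X-property, let $s<t$ be vertices with $d^*:=\operatorname{dist}(s,t)<\infty$, and let $P=p_0,p_1,\dots,p_{d^*}$ (with $p_0=s$, $p_{d^*}=t$) be a shortest $s$-$t$ path. Then $\operatorname{righti}(P)<\operatorname{lefti}(P)$ holds if and only if $P$ contains a pair of crossing edges. Moreover, if $P$ contains a pair of crossing edges, then $\operatorname{righti}(P)=\operatorname{lefti}(P)-1$ and $p_i<p_j$ for all indices $i<\operatorname{righti}(P)<\operatorname{lefti}(P)<j$.
   Context: The X-property: for all vertices $p<q<r<s$, if $\{p,r\}\in E(G)$ and $\{q,s\}\in E(G)$ then $\{p,s\}\in E(G)$. $\operatorname{dist}$ is the number of edges of a shortest path. $\operatorname{lefti}(P)$ is the index $i$ such that $p_i$ is the leftmost (w.r.t. $<$) vertex of $P$, and $\operatorname{righti}(P)$ the index of the rightmost vertex of $P$. Two edges $\{a,b\}$, $\{c,d\}$ with $a<b$, $c<d$ are crossing if $a<c<b<d$ or $c<a<d<b$. *)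

From mathcomp Require Import all_boot all_order.
Set Implicit Arguments. Unset Strict Implicit. Unset Printing Implicit Defensive.
Import Order.TTheory.
Local Open Scope order_scope.

Definition simple_graph {T : Type} (e : rel T) :=
  symmetric e /\ irreflexive e.

Definition X_property {d} {T : orderType d} (e : rel T) :=
  forall p q r s : T, p < q -> q < r -> r < s -> e p r -> e q s -> e p s.

(* p = [:: p_0; ...; p_k] is an s-t walk in e (k edges, k = size p - 1). *)
Definition walk {T : eqType} (e : rel T) (s t : T) (p : seq T) :=
  [/\ p != [::], head s p = s, last s p = t &
      forall i, i.+1 < size p -> e (nth s p i) (nth s p i.+1)].

(* p is a shortest s-t path: an s-t walk with a minimum number of edges;
   its number of edges size p - 1 is dist(s,t) (finite since p exists). *)
Definition shortest_path {T : eqType} (e : rel T) (s t : T) (p : seq T) :=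
  walk e s t p /\ forall q, walk e s t q -> size p <= size q.

Definition lefti {d} {T : orderType d} (p : seq T) (x0 : T) : nat :=
  index (foldr Order.min (head x0 p) p) p.
Definition righti {d} {T : orderType d} (p : seq T) (x0 : T) : nat :=
  index (foldr Order.max (head x0 p) p) p.

Definition crossing {d} {T : orderType d} (a b c e : T) :=
  let a' := Order.min a b in let b' := Order.max a b in
  let c' := Order.min c e in let d' := Order.max c e in
  (a' < c' < b') && (b' < d') || (c' < a' < d') && (d' < b').

Definition has_crossing {d} {T : orderType d} (p : seq T) (x0 : T) :=
  exists i j, [/\ i.+1 < size p, j.+1 < size p &
    crossing (nth x0 p i) (nth x0 p i.+1) (nth x0 p j) (nth x0 p j.+1)].

From mathcomp Require Import all_boot all_order zify.
Set Implicit Arguments. Unset Strict Implicit. Unset Printing Implicit Defensive.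
Import Order.TTheory.
Local Open Scope order_scope.

(* Two crossing edges uv and wz of a shortest path with u < w < v < z force the
   chord uz by the X-property, so the four vertices are consecutive: the
   crossing edges are the edges k and k+2 of a zigzag
   p_{k+2} < p_k < p_{k+3} < p_{k+1} or of its mirror image, and edges more
   than two steps apart never cross.  The main tool is a discrete intermediate
   value argument: if a subpath has a vertex strictly between two values of a
   disjoint subpath and a vertex beyond all of its values, some edges of the two
   subpaths cross.  Applied to far-apart subpaths, it shows that around a zigzag
   every vertex lies between p_{k+2} and p_{k+1}, and that the vertices before
   p_k lie below those after p_{k+3}; for the mirror image this would put t
   below s.  Conversely, if the maximum comes before the minimum, the subpath
   from the minimum to t passes over the level of s = p_0, while the subpath
   from s to the maximum rises above all of it. *)

(* [lia] is very slow in the presence of hypotheses about an abstract order: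
   discard them first. *)
Ltac nat_lia :=
  repeat match goal with
  | H : context [@Order.lt _ _ ?x _] |- _ =>
      let ty := type of x in lazymatch ty with nat => fail | _ => clear H end
  | H : context [@Order.le _ _ ?x _] |- _ =>
      let ty := type of x in lazymatch ty with nat => fail | _ => clear H end
  end; lia.

Lemma nat_sign_change (P : pred nat) i j : P i != P j ->
  exists2 a, (minn i j <= a < maxn i j)%N & P a != P a.+1.
Proof.
have up m k : P m != P (m + k) -> exists2 a, (m <= a < m + k)%N & P a != P a.+1.
  elim: k => [|k IHk]; first by rewrite addn0 eqxx.
  case: (eqVneq (P m) (P (m + k))) => [eq_mk | /IHk[a a_lt ch_a] _].
    by rewrite addnS eq_mk => ch; exists (m + k) => //; nat_lia.
  by exists a => //; nat_lia.
case: (leqP i j) => [le_ij | lt_ji] ch_ij.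
  have : P i != P (i + (j - i)) by rewrite subnKC.
  by case/up => a a_lt ch_a; exists a => //; nat_lia.
have : P j != P (j + (i - j)) by rewrite subnKC 1?eq_sym // ltnW.
by case/up => a a_lt ch_a; exists a => //; nat_lia.
Qed.

Lemma nat_edge_across (P : pred nat) lo hi i j :
  (lo <= i <= hi)%N -> (lo <= j <= hi)%N -> P i -> ~~ P j ->
  exists u v, [/\ u.+1 = v \/ v.+1 = u, (lo <= u <= hi)%N, (lo <= v <= hi)%N, P u & ~~ P v].
Proof.
move=> i_in j_in Pi nPj.
have /nat_sign_change[a a_in] : P i != P j by rewrite Pi (negbTE nPj).
have {a_in i_in j_in} [lo_a a_hi] : (lo <= a /\ a < hi)%N by nat_lia.
by case: (boolP (P a)) => Pa; case: (boolP (P a.+1)) => Pa1 // _;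
  [exists a, a.+1 | exists a.+1, a]; split => //; nat_lia.
Qed.

Lemma minn_adjacent_in u v lo hi : u.+1 = v \/ v.+1 = u ->
  (lo <= u <= hi)%N -> (lo <= v <= hi)%N -> (lo <= minn u v < hi)%N.
Proof. nat_lia. Qed.

Section Crossing.
Variables (disp : Order.disp_t) (T : orderType disp).
Implicit Types (a b c x u v w z : T).

Lemma crossingC a b c x : crossing a b c x = crossing c x a b.
Proof. by rewrite /crossing orbC. Qed.

Lemma crossing_swapl a b c x : crossing a b c x = crossing b a c x.
Proof. by rewrite /crossing !minElt !maxElt; case: (ltgtP a b) => // ->. Qed.

Lemma crossing_swapr a b c x : crossing a b c x = crossing a b x c.
Proof. by rewrite crossingC crossing_swapl crossingC. Qed.

Lemma crossing_split u v w z : u < w < v -> (z < u) || (v < z) -> crossing u v w z.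
Proof.
case/andP=> uw wv /orP[zu | vz].
  rewrite crossing_swapr /crossing !minElt !maxElt (lt_trans uw wv) (lt_trans zu uw).
  by rewrite zu uw wv orbT.
by rewrite /crossing !minElt !maxElt (lt_trans uw wv) (lt_trans wv vz) uw wv vz.
Qed.

Lemma crossing_orient a b c x : crossing a b c x ->
  exists u v w z, [/\ u = a /\ v = b \/ u = b /\ v = a,
    w = c /\ z = x \/ w = x /\ z = c &
    (u < w < v) && (v < z) || (w < u < z) && (z < v)].
Proof.
rewrite /crossing !minElt !maxElt.
by case: ifP => _; case: ifP => _ cr; [exists a, b, c, x|exists a, b, x, c|
  exists b, a, c, x|exists b, a, x, c]; split; auto.
Qed.

End Crossing.

Lemma exists_argmax d (T : orderType d) (f : nat -> T) i j : (i <= j)%N ->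
  exists2 m, (i <= m <= j)%N & forall l, (i <= l <= j)%N -> f l <= f m.
Proof.
move=> le_ij; have i_lt : (i < j.+1)%N by [].
have := @arg_maxP _ _ _ (Ordinal i_lt) (fun l : 'I_j.+1 => (i <= l)%N) (f \o val) (leqnn i).
case=> m i_m max_m.
exists (val m); first by rewrite i_m -ltnS ltn_ord.
by move=> l /andP[i_l l_j]; apply: (max_m (Ordinal (l_j : (l < j.+1)%N))).
Qed.

Lemma exists_argmin d (T : orderType d) (f : nat -> T) i j : (i <= j)%N ->
  exists2 m, (i <= m <= j)%N & forall l, (i <= l <= j)%N -> f m <= f l.
Proof. exact: (@exists_argmax _ T^d f i j). Qed.

Section InjectiveIndexing.
Variables (disp : Order.disp_t) (T : orderType disp) (f : nat -> T) (n : nat).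
Hypothesis f_inj : forall i j, (i < n)%N -> (j < n)%N -> f i = f j -> i = j.

Lemma ltf_lef i j : (i < n)%N -> (j < n)%N -> i <> j -> (f i < f j) = (f i <= f j).
Proof. by move=> lt_i lt_j ij; rewrite lt_neqAle; case: eqP => // /(f_inj lt_i lt_j). Qed.

Definition cross_at i j := crossing (f i) (f i.+1) (f j) (f j.+1).

Lemma cross_at_edges u v w z : u.+1 = v \/ v.+1 = u -> w.+1 = z \/ z.+1 = w ->
  crossing (f u) (f v) (f w) (f z) -> cross_at (minn u v) (minn w z).
Proof.
rewrite /cross_at; case=> <-; case=> <-.
- by have [-> ->] : minn u u.+1 = u /\ minn w w.+1 = w by nat_lia.
- have [-> ->] : minn u u.+1 = u /\ minn z.+1 z = z by nat_lia.
  by rewrite crossing_swapr.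
- have [-> ->] : minn v.+1 v = v /\ minn w w.+1 = w by nat_lia.
  by rewrite crossing_swapl.
- have [-> ->] : minn v.+1 v = v /\ minn z.+1 z = z by nat_lia.
  by rewrite crossing_swapl crossing_swapr.
Qed.

(* From i1 to i2 the first subpath passes over the level f jc along an edge vu;
   from jc to jw the second subpath leaves the span of vu along an edge crossing it. *)
Lemma cross_at_of_straddle a1 a2 b1 b2 i1 i2 jc jw :
  (a2 < n)%N -> (b2 < n)%N -> (a2 < b1 \/ b2 < a1)%N ->
  (a1 <= i1 <= a2)%N -> (a1 <= i2 <= a2)%N -> (b1 <= jc <= b2)%N -> (b1 <= jw <= b2)%N ->
  f i1 < f jc < f i2 ->
  (forall l, (a1 <= l <= a2)%N -> f jw < f l) \/ (forall l, (a1 <= l <= a2)%N -> f l < f jw) ->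
  exists a b, [/\ (a1 <= a < a2)%N, (b1 <= b < b2)%N & cross_at a b].
Proof.
move=> lt_a2 lt_b2 disj i1_in i2_in jc_in jw_in /andP[lt1 lt2] jw_out.
have ltf x y : (a1 <= x <= a2)%N -> (b1 <= y <= b2)%N ->
    (f x < f y) = (f x <= f y) /\ (f y < f x) = (f y <= f x).
  by move=> x_in y_in; rewrite !ltf_lef //; nat_lia.
have jc_i1 : ~~ (f jc < f i1) by rewrite -leNgt ltW.
have [u [v [uv u_in v_in jc_u]]] :=
  @nat_edge_across (fun l => f jc < f l) _ _ _ _ i2_in i1_in lt2 jc_i1.
rewrite -leNgt -(ltf _ _ v_in jc_in).1 => v_jc.
pose inside l := (f v < f l) && (f l < f u).
have in_jc : inside jc by rewrite /inside v_jc jc_u.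
have out_jw : ~~ inside jw.
  rewrite /inside negb_and -!leNgt; case: jw_out => lt.
    by rewrite ltW // lt.
  by rewrite orbC ltW // lt.
have [w [z [wz w_in z_in /andP[v_w w_u]]]] :=
  @nat_edge_across inside _ _ _ _ jc_in jw_in in_jc out_jw.
rewrite negb_and -!leNgt -(ltf _ _ v_in z_in).2 -(ltf _ _ u_in z_in).1 => z_out.
have vu : v.+1 = u \/ u.+1 = v by case: uv; auto.
exists (minn v u), (minn w z); split; [exact: minn_adjacent_in | exact: minn_adjacent_in |].
by apply: cross_at_edges => //; apply: crossing_split z_out; rewrite v_w w_u.
Qed.

Lemma cross_at_of_edge_straddle a b1 b2 jc jw :
  (a.+1 < n)%N -> (b2 < n)%N -> (a.+1 < b1 \/ b2 < a)%N ->
  (b1 <= jc <= b2)%N -> (b1 <= jw <= b2)%N ->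
  f a < f jc < f a.+1 -> (f jw < f a) || (f a.+1 < f jw) ->
  exists2 b, (b1 <= b < b2)%N & cross_at a b.
Proof.
move=> lt_a lt_b2 disj jc_in jw_in lts jw_out.
have a_a1 : f a < f a.+1 by case/andP: lts; apply: lt_trans.
have jw_outside : (forall l, (a <= l <= a.+1)%N -> f jw < f l) \/
                  (forall l, (a <= l <= a.+1)%N -> f l < f jw).
  have l_cases l : (a <= l <= a.+1)%N -> l = a \/ l = a.+1 by nat_lia.
  case/orP: jw_out => lt; [left | right] => l /l_cases[]->;
    first [done | exact: lt_trans lt a_a1 | exact: lt_trans a_a1 lt].
have [a' [b [a'_in b_in cr]]] :
    exists a' b, [/\ (a <= a' < a.+1)%N, (b1 <= b < b2)%N & cross_at a' b].
  by apply: (cross_at_of_straddle (i1 := a) (i2 := a.+1) (jc := jc) (jw := jw)) => //; nat_lia.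
by exists b; rewrite // (_ : a = a'); nat_lia.
Qed.

End InjectiveIndexing.

Section ExtremeIndex.
Variables (disp : Order.disp_t) (T : orderType disp).
Implicit Types (x : T) (r p : seq T).

Lemma foldr_max_mem x r : foldr Order.max x r \in x :: r.
Proof.
elim: r => [|y r IHr] /=; first by rewrite mem_seq1.
rewrite maxElt; case: ifP => _; last by rewrite !inE eqxx orbT.
by move: IHr; rewrite !inE => /orP[->|->]; rewrite ?orbT.
Qed.

Lemma foldr_max_ge x r y : y \in r -> y <= foldr Order.max x r.
Proof. by move=> y_r; rewrite foldrE; apply: le_bigmax_seq. Qed.

Lemma righti_lt_size p x0 : (0 < size p)%N -> (righti p x0 < size p)%N.
Proof.
case: p => // y r _; rewrite /righti index_mem.
by have := foldr_max_mem y (y :: r); rewrite inE => /orP[/eqP ->|]; rewrite ?mem_head.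
Qed.

Lemma nth_righti_ge p x0 i : (i < size p)%N -> nth x0 p i <= nth x0 p (righti p x0).
Proof.
move=> lt_i; have := righti_lt_size x0 (leq_ltn_trans (leq0n i) lt_i).
by rewrite /righti index_mem => max_p; rewrite nth_index // foldr_max_ge // mem_nth.
Qed.

Lemma righti_eq p x0 k : uniq p -> (k < size p)%N ->
  (forall i, (i < size p)%N -> nth x0 p i <= nth x0 p k) -> righti p x0 = k.
Proof.
move=> p_uniq lt_k max_k; have lt_r := righti_lt_size x0 (leq_ltn_trans (leq0n k) lt_k).
by apply/eqP; rewrite -(nth_uniq x0 lt_r lt_k p_uniq) eq_le max_k ?nth_righti_ge.
Qed.

Lemma lefti_dual p x0 : lefti p x0 = righti (T := T^d) p x0.
Proof.
have min_dual y r : foldr Order.min y r = foldr (Order.max (T := T^d)) y r.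
  by elim: r => //= z r ->; rewrite minEgt.
by rewrite /lefti min_dual.
Qed.

End ExtremeIndex.

Lemma lefti_lt_size d (T : orderType d) (p : seq T) x0 :
  (0 < size p)%N -> (lefti p x0 < size p)%N.
Proof. by rewrite lefti_dual; apply: (righti_lt_size (T := T^d)). Qed.

Lemma nth_lefti_le d (T : orderType d) (p : seq T) x0 i :
  (i < size p)%N -> nth x0 p (lefti p x0) <= nth x0 p i.
Proof. by rewrite lefti_dual; apply: (nth_righti_ge (T := T^d)). Qed.

Lemma lefti_eq d (T : orderType d) (p : seq T) x0 k : uniq p -> (k < size p)%N ->
  (forall i, (i < size p)%N -> nth x0 p k <= nth x0 p i) -> lefti p x0 = k.
Proof. by rewrite lefti_dual; apply: (righti_eq (T := T^d)). Qed.

(* The mirror image p_{k+1} < p_{k+3} < p_k < p_{k+2} is a zigzag for the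
   reversed order [T^d]. *)
Definition zigzag d (T : orderType d) (f : nat -> T) k :=
  [&& f k.+2 < f k, f k < f k.+3 & f k.+3 < f k.+1].

Lemma X_property_dual d (T : orderType d) (e : rel T) :
  symmetric e -> X_property e -> X_property (e : rel T^d).
Proof.
move=> e_sym e_X p q r s pq qr rs pr qs; rewrite e_sym.
by apply: (e_X s r q p); rewrite // e_sym.
Qed.

Section ShortestPath.
Variables (disp : Order.disp_t) (T : orderType disp) (e : rel T) (s t : T) (p : seq T).
Hypothesis e_simple : simple_graph e.
Hypothesis e_X : X_property e.
Hypothesis p_shortest : shortest_path e s t p.
Local Notation n := (size p).
Local Notation f := (nth s p).

Lemma shortest_path_head : f 0 = s.
Proof. by case: p_shortest => -[_ p_head _ _] _; rewrite nth0. Qed.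

Lemma shortest_path_last : f n.-1 = t.
Proof. by case: p_shortest => -[_ _ p_last _] _; rewrite nth_last. Qed.

Lemma shortest_path_size_gt0 : (0 < n)%N.
Proof. by case: p_shortest => -[p_nil _ _ _] _; rewrite lt0n size_eq0. Qed.

Lemma shortest_path_step i : (i.+1 < n)%N -> e (f i) (f i.+1).
Proof. by case: p_shortest => -[_ _ _ p_edge] _; apply: p_edge. Qed.

Lemma shortest_path_min q : walk e s t q -> (n <= size q)%N.
Proof. by case: p_shortest => _; apply. Qed.

Lemma shortest_path_edge a b : a.+1 = b \/ b.+1 = a -> (a < n)%N -> (b < n)%N ->
  e (f a) (f b).
Proof.
case=> <- lt_a lt_b; first exact: shortest_path_step.
by case: e_simple => e_sym _; rewrite e_sym shortest_path_step.
Qed.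

Lemma walk_take_drop c b : (c <= b < n)%N -> ((0 < c)%N -> e (f c.-1) (f b)) ->
  (c = 0 -> f b = s) -> walk e s t (take c p ++ drop b p).
Proof.
case/andP=> le_cb lt_b junction head_b; have le_cn : (c <= n)%N by nat_lia.
have size_q : size (take c p ++ drop b p) = (c + (n - b))%N.
  by rewrite size_cat size_takel ?size_drop.
have nth_q i : nth s (take c p ++ drop b p) i = if (i < c)%N then f i else f (b + (i - c)).
  by rewrite nth_cat size_takel //; case: ifP => i_c; rewrite ?nth_take ?nth_drop.
split.
- by rewrite -size_eq0 size_q; nat_lia.
- rewrite -nth0 nth_q; case: ifP => [_ | /negbT]; first exact: shortest_path_head.
  by rewrite -leqNgt leqn0 => /eqP c0; rewrite c0 subnn addn0 head_b.
- rewrite -nth_last size_q nth_q ifF; last by nat_lia.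
  by rewrite (_ : (b + _)%N = n.-1) ?shortest_path_last //; nat_lia.
- move=> i; rewrite size_q !nth_q => lt_i.
  case: (ltngtP i.+1 c) => [lt_ic | lt_ci | eq_ic].
  + by rewrite shortest_path_step //; nat_lia.
  + rewrite (_ : (b + (i.+1 - c))%N = (b + (i - c)).+1); last by nat_lia.
    by rewrite shortest_path_step //; nat_lia.
  + by move: junction; rewrite -eq_ic subnn addn0 => ->.
Qed.

Lemma shortest_path_splice c b : (c <= b < n)%N -> ((0 < c)%N -> e (f c.-1) (f b)) ->
  (c = 0 -> f b = s) -> (b <= c)%N.
Proof.
move=> cb junction head_b; have := shortest_path_min (walk_take_drop cb junction head_b).
have -> : size (take c p ++ drop b p) = (c + (n - b))%N.
  by rewrite size_cat size_takel ?size_drop //; nat_lia.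
nat_lia.
Qed.

Lemma shortest_path_nth_inj i j : (i < n)%N -> (j < n)%N -> f i = f j -> i = j.
Proof.
have no_repeat a b : (a < b < n)%N -> f a <> f b.
  move=> lt_ab eq_ab; suff : (b <= a)%N by nat_lia.
  apply: shortest_path_splice => [| a_gt0 | a0]; first nat_lia.
    by rewrite -eq_ab shortest_path_edge; nat_lia.
  by rewrite -eq_ab a0 shortest_path_head.
move=> lt_i lt_j eq_ij; case: (ltngtP i j) => // lt; exfalso.
  by apply: (no_repeat i j) => //; nat_lia.
by apply: (no_repeat j i) => //; nat_lia.
Qed.

Lemma shortest_path_uniq : uniq p.
Proof. by apply/(uniqP s) => i j; apply: shortest_path_nth_inj. Qed.

Lemma shortest_path_chordless a b : (a < b < n)%N -> e (f a) (f b) -> b = a.+1.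
Proof.
move=> lt_ab e_ab; suff : (b <= a.+1)%N by nat_lia.
by apply: shortest_path_splice => [| _ | /eqP //]; [nat_lia | exact: e_ab].
Qed.

Lemma shortest_path_adjacent a b : (a < n)%N -> (b < n)%N -> e (f a) (f b) ->
  a.+1 = b \/ b.+1 = a.
Proof.
case: e_simple => e_sym e_irr lt_a lt_b e_ab.
case: (ltngtP a b) => [lt_ab | lt_ba | eq_ab].
- by left; apply/esym/shortest_path_chordless => //; nat_lia.
- by right; apply/esym/shortest_path_chordless; [nat_lia | rewrite e_sym].
- by move: e_ab; rewrite eq_ab e_irr.
Qed.

Lemma interleaved_edges_zigzag iu iv iw iz :
  (iu < n)%N -> (iv < n)%N -> (iw < n)%N -> (iz < n)%N ->
  iu.+1 = iv \/ iv.+1 = iu -> iw.+1 = iz \/ iz.+1 = iw ->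
  f iu < f iw -> f iw < f iv -> f iv < f iz ->
  exists k, [/\ (k.+3 < n)%N,
    minn iu iv = k /\ minn iw iz = k.+2 \/ minn iu iv = k.+2 /\ minn iw iz = k &
    zigzag f k \/ zigzag (T := T^d) f k].
Proof.
move=> lt_u lt_v lt_w lt_z uv wz uw wv vz.
have e_uz : e (f iu) (f iz).
  by apply: (e_X uw wv vz); apply: shortest_path_edge.
have uz := shortest_path_adjacent lt_u lt_z e_uz.
have ne x y : f x < f y -> x <> y by move=> lt_xy eq_xy; rewrite eq_xy ltxx in lt_xy.
have [ne_uw ne_vz] := (ne _ _ uw, ne _ _ vz).
have [[eu [ez ew]] | [ez [eu ev]]] :
    iu = iv.+1 /\ iz = iv.+2 /\ iw = iv.+3 \/ iz = iw.+1 /\ iu = iw.+2 /\ iv = iw.+3.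
  by nat_lia.
- by exists iv; subst; split; [nat_lia | nat_lia | right; apply/and3P].
- by exists iw; subst; split; [nat_lia | nat_lia | left; apply/and3P].
Qed.

Lemma cross_at_zigzag i j : (i.+1 < n)%N -> (j.+1 < n)%N -> cross_at f i j ->
  exists k, [/\ (k.+3 < n)%N, i = k /\ j = k.+2 \/ i = k.+2 /\ j = k &
    zigzag f k \/ zigzag (T := T^d) f k].
Proof.
move=> lt_i lt_j /crossing_orient[u [v [w [z [uv wz cr]]]]].
have [iu [iv [eu ev adj_uv]]] : exists iu iv,
    [/\ u = f iu, v = f iv & iu = i /\ iv = i.+1 \/ iu = i.+1 /\ iv = i].
  by case: uv => -[-> ->]; [exists i, i.+1 | exists i.+1, i]; split; auto.
have [iw [iz [ew ez adj_wz]]] : exists iw iz,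
    [/\ w = f iw, z = f iz & iw = j /\ iz = j.+1 \/ iw = j.+1 /\ iz = j].
  by case: wz => -[-> ->]; [exists j, j.+1 | exists j.+1, j]; split; auto.
subst u v w z; case/orP: cr => /andP[/andP[lt1 lt2] lt3].
- have [||||||k [lt_k ij zz]] := interleaved_edges_zigzag _ _ _ _ _ _ lt1 lt2 lt3; try nat_lia.
  by exists k; split => //; nat_lia.
- have [||||||k [lt_k ij zz]] := interleaved_edges_zigzag _ _ _ _ _ _ lt1 lt2 lt3; try nat_lia.
  by exists k; split => //; nat_lia.
Qed.

Lemma cross_at_far i j : (i.+1 < n)%N -> (j.+1 < n)%N -> (i.+2 < j \/ j.+2 < i)%N ->
  ~ cross_at f i j.
Proof. by move=> lt_i lt_j far /cross_at_zigzag[] // k [_ ij _]; nat_lia. Qed.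

Lemma zigzag_range k : zigzag f k -> (k.+3 < n)%N ->
  forall l, (l < n)%N -> f k.+2 <= f l <= f k.+1.
Proof.
move=> /and3P[z1 z2 z3] lt_k l lt_l.
case: (ltnP l k) => [l_k | k_l]; [|case: (ltnP k.+3 l) => [k3_l | l_k3]].
- rewrite !leNgt -negb_or; apply/negP => out.
  have [b b_in cr] : exists2 b, (l <= b < k)%N & cross_at f k.+2 b.
    apply: (cross_at_of_edge_straddle shortest_path_nth_inj (jc := k) (jw := l));
      rewrite ?z1 ?z2 //; try nat_lia.
    by case/orP: out => [-> // | lt]; rewrite (lt_trans z3 lt) orbT.
  by apply: (cross_at_far _ _ _ cr); nat_lia.
- rewrite !leNgt -negb_or; apply/negP => out.
  have [b b_in cr] : exists2 b, (k.+3 <= b < l)%N & cross_at f k b.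
    apply: (cross_at_of_edge_straddle shortest_path_nth_inj (jc := k.+3) (jw := l));
      rewrite ?z2 ?z3 //; try nat_lia.
    by case/orP: out => [lt | ->]; rewrite ?(lt_trans lt z1) ?orbT.
  by apply: (cross_at_far _ _ _ cr); nat_lia.
- have [->|[->|[->|->]]] : l = k \/ l = k.+1 \/ l = k.+2 \/ l = k.+3 by nat_lia.
  + by rewrite !ltW // (lt_trans z2 z3).
  + by rewrite lexx ltW // (lt_trans z1 (lt_trans z2 z3)).
  + by rewrite lexx ltW // (lt_trans z1 (lt_trans z2 z3)).
  + by rewrite !ltW // (lt_trans z1 z2).
Qed.

Lemma zigzag_prefix_lt_suffix k i j : zigzag f k -> (i <= k)%N -> (k.+3 <= j < n)%N ->
  f i < f j.
Proof.
move=> /and3P[z1 z2 z3] i_k /andP[k3_j lt_j].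
have ltf := ltf_lef shortest_path_nth_inj.
(* Compare the extremes of the prefix [i, k] and of the suffix [k+3, j]: each
   case yields two crossing edges more than two steps apart. *)
rewrite ltNge; apply/negP => le_ji.
have lt_ji : f j < f i by rewrite ltf //; nat_lia.
have [M M_in M_max] := exists_argmax f i_k.
have [m m_in m_min] := exists_argmin f i_k.
have [M' M'_in M'_max] := exists_argmax f k3_j.
have [m' m'_in m'_min] := exists_argmin f k3_j.
case: (ltP (f M') (f M)) => [c1 | c1].
  have [a [b [a_in b_in cr]]] :
      exists a b, [/\ (k.+2 <= a < j)%N, (i <= b < k)%N & cross_at f a b].
    apply: (cross_at_of_straddle shortest_path_nth_inj
             (i1 := k.+2) (i2 := k.+3) (jc := k) (jw := M));
      rewrite ?z1 ?z2 //; try nat_lia.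
    right => l l_in; case: (ltnP k.+2 l) => [l_gt | l_le].
      by apply: le_lt_trans c1; apply: M'_max; nat_lia.
    by rewrite (_ : l = k.+2); [apply: lt_le_trans z1 _; apply: M_max | ]; nat_lia.
  by apply: (cross_at_far _ _ _ cr); nat_lia.
case: (ltP (f m') (f m)) => [c2 | c2].
  have [a [b [a_in b_in cr]]] :
      exists a b, [/\ (i <= a < k.+1)%N, (k.+3 <= b < j)%N & cross_at f a b].
    apply: (cross_at_of_straddle shortest_path_nth_inj
             (i1 := k) (i2 := k.+1) (jc := k.+3) (jw := m'));
      rewrite ?z2 ?z3 //; try nat_lia.
    left => l l_in; case: (ltnP k l) => [l_gt | l_le].
      by rewrite (_ : l = k.+1); [apply: le_lt_trans z3; apply: m'_min | ]; nat_lia.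
    by apply: lt_le_trans c2 _; apply: m_min; nat_lia.
  by apply: (cross_at_far _ _ _ cr); nat_lia.
have [a [b [a_in b_in cr]]] :
    exists a b, [/\ (i <= a < k)%N, (k.+3 <= b < j)%N & cross_at f a b].
  apply: (cross_at_of_straddle shortest_path_nth_inj
           (i1 := m) (i2 := i) (jc := j) (jw := M'));
    rewrite ?lt_ji ?andbT //; try nat_lia.
  - rewrite ltf; [|nat_lia|nat_lia|nat_lia].
    by apply: le_trans c2 _; apply: m'_min; nat_lia.
  - right => l l_in; rewrite ltf; [|nat_lia|nat_lia|nat_lia].
    by apply: le_trans c1; apply: M_max; nat_lia.
by apply: (cross_at_far _ _ _ cr); nat_lia.
Qed.

End ShortestPath.

Lemma shortest_path_no_reverse_zigzag d (T : orderType d) (e : rel T) (s t : T) p k :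
  simple_graph e -> X_property e -> s < t -> shortest_path e s t p -> (k.+3 < size p)%N ->
  ~~ zigzag (T := T^d) (nth s p) k.
Proof.
move=> e_simple e_X lt_st p_shortest lt_k; apply/negP => zz.
have e_X' := X_property_dual e_simple.1 e_X.
have last_in : (k.+3 <= (size p).-1 < size p)%N by nat_lia.
have := zigzag_prefix_lt_suffix (T := T^d) e_simple e_X' p_shortest zz (leq0n k) last_in.
by rewrite (shortest_path_head p_shortest) (shortest_path_last p_shortest) ltEdual lt_gtF.
Qed.

Section CrossingShortestPath.
Variables (disp : Order.disp_t) (T : orderType disp) (e : rel T) (s t : T) (p : seq T).
Hypothesis e_simple : simple_graph e.
Hypothesis e_X : X_property e.
Hypothesis s_lt_t : s < t.
Hypothesis p_shortest : shortest_path e s t p.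
Local Notation n := (size p).
Local Notation f := (nth s p).

Lemma has_crossing_zigzag : has_crossing p s ->
  exists k, [/\ (k.+3 < n)%N, righti p s = k.+1, lefti p s = k.+2 & zigzag f k].
Proof.
case=> i [j [lt_i lt_j cr]].
have [k [lt_k _ [zz | zz]]] := cross_at_zigzag e_simple e_X p_shortest lt_i lt_j cr;
  last first.
  by case/negP: (shortest_path_no_reverse_zigzag e_simple e_X s_lt_t p_shortest lt_k).
have range := zigzag_range e_simple e_X p_shortest zz lt_k.
have p_uniq := shortest_path_uniq e_simple p_shortest.
exists k; split => //.
- by apply: righti_eq => [//||l /range/andP[_ ->]]; nat_lia.
- by apply: lefti_eq => [//||l /range/andP[-> _]]; nat_lia.
Qed.

Lemma righti_lt_lefti_has_crossing : (righti p s < lefti p s)%N -> has_crossing p s.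
Proof.
move=> lt_rl; have n_gt0 := shortest_path_size_gt0 p_shortest.
have [lt_r lt_l] := (righti_lt_size s n_gt0, lefti_lt_size s n_gt0).
have f_inj := shortest_path_nth_inj e_simple p_shortest.
have ltf := ltf_lef f_inj.
have l_0 : f (lefti p s) < f 0 by rewrite ltf ?nth_lefti_le //; nat_lia.
have [a [b [a_in b_in cr]]] :
    exists a b, [/\ (lefti p s <= a < n.-1)%N, (0 <= b < righti p s)%N & cross_at f a b].
  apply: (cross_at_of_straddle f_inj
           (i1 := lefti p s) (i2 := n.-1) (jc := 0) (jw := righti p s)); try nat_lia.
  - by rewrite l_0 (shortest_path_head p_shortest) (shortest_path_last p_shortest) s_lt_t.
  - by right => m m_in; rewrite ltf ?nth_righti_ge //; nat_lia.
by exists a, b; split => //; nat_lia.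
Qed.

Lemma has_crossing_prefix_lt_suffix : has_crossing p s ->
  forall i j, (i < righti p s)%N -> (lefti p s < j)%N -> (j < n)%N -> f i < f j.
Proof.
move=> /has_crossing_zigzag[k [lt_k -> -> zz]] i j lt_i lt_j lt_jn.
by apply: (zigzag_prefix_lt_suffix e_simple e_X p_shortest zz); nat_lia.
Qed.

End CrossingShortestPath.

Theorem lemma7 (d : Order.disp_t) (T : orderType d) (e : rel T)
  (s t : T) (p : seq T) :
  simple_graph e -> X_property e -> s < t -> shortest_path e s t p ->
  ((righti p s < lefti p s)%N <-> has_crossing p s) /\
  (has_crossing p s ->
     righti p s = (lefti p s).-1 /\
     forall i j, (i < righti p s)%N -> (lefti p s < j)%N -> (j < size p)%N ->
       nth s p i < nth s p j).
Proof.
move=> e_simple e_X lt_st p_shortest.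
have zigzag_of := has_crossing_zigzag e_simple e_X lt_st p_shortest.
split; first split.
- exact: righti_lt_lefti_has_crossing e_simple lt_st p_shortest.
- by case/zigzag_of => k [_ -> -> _].
- move=> cr; split; first by have [k [_ -> -> _]] := zigzag_of cr.
  exact: has_crossing_prefix_lt_suffix e_simple e_X lt_st p_shortest cr.
Qed.
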